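(* Let $K$ be a field of characteristic zero, $n\ge 1$, and $M=\mathrm{Mat}(n,K)$. Let $U\subset \mathrm{GL}(n,K)$ be the group of upper triangular matrices with all diagonal entries equal to $1$, acting on the polynomial ring $K[M]$ by $(\rho_g f)(A)=f(g^{-1}Ag)$. For every $1\le k\le n$ and $0\le i\le k-1$, the polynomial $J_{k,i}\in K[M]$ (defined in the context) is $U$-invariant, i.e. $\rho_u J_{k,i}=J_{k,i}$ for all $u\in U$.
   Context: Let $\{x_{ij}\}_{1\le i,j\le n}$ be the standard coordinate functions on $M$, let $X=(x_{ij})$ be the generic matrix and $X^*=(x^*_{ij})$ its adjugate matrix, so $XX^*=X^*X=\det X\cdot E$ (entries of $X^*$ are polynomials in the $x_{ij}$). For $1\le k\le n$ and $0\le i\le k-1$, $J_{k,i}$ is the determinant of the $k\times k$ matrix whose first $k-i$ rows are the rows $n-k+i+1,\dots,n$ of $X$ restricted to columns $1,\dots,k$, and whose last $i$ rows are the rows $n-i+1,\dots,n$ of $X^*$ restricted to columns $1,\dots,k$. In particular $J_{k,0}$ is the lower-left corner $k\times k$ minor of $X$ (rows $n-k+1,\dots,n$, columns $1,\dots,k$). *)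

From HB Require Import structures.
From mathcomp Require Import all_boot all_order all_algebra.
From mathcomp Require Import mpoly.
Set Implicit Arguments. Unset Strict Implicit. Unset Printing Implicit Defensive.
Import Order.TTheory GRing.Theory.
Local Open Scope ring_scope.

(* K[M] := {mpoly K[n*n]}; the variable 'X_(mxvec_index i j) is x_{ij}. *)
Section Generic.
Variables (K : fieldType) (n : nat).

Definition coordring := {mpoly K[n * n]}.

Definition genmx : 'M[coordring]_n := vec_mx (\row_k 'X_k).

Definition genadj : 'M[coordring]_n := \adj genmx.

Definition entry (A : 'M[coordring]_n) (a b : nat) : coordring :=
  match insub a, insub b with
  | Some i, Some j => A i j
  | _, _ => 0
  end.

(* J_{k,i}: rows n-k+i+1..n of X then rows n-i+1..n of X^* (1-indexed),
   columns 1..k; here 0-indexed. *)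
Definition J (k i : nat) : coordring :=
  \det (\matrix_(r < k, c < k)
          if (r < k - i)%N then entry genmx (n - k + i + r) c
          else entry genadj (n - i + (r - (k - i))) c).

(* the action (rho_g f)(A) = f(g^{-1} A g): substitute x_ij by (g^{-1} X g)_ij *)
Definition rho (g : 'M[K]_n) (f : coordring) : coordring :=
  let S := map_mx (fun c => c%:MP) (invmx g) *m genmx *m map_mx (fun c => c%:MP) g in
  f \mPo [tuple mxvec S 0 k | k < n * n].

Definition unitriangular (u : 'M[K]_n) : Prop :=
  (forall i j : 'I_n, (j < i)%N -> u i j = 0) /\ (forall i : 'I_n, u i i = 1).

End Generic.

From Pilot Require Import Defs.
From HB Require Import structures.
From mathcomp Require Import all_boot all_order all_algebra.
From mathcomp Require Import mpoly zify.
Import GRing.Theory.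
Local Open Scope ring_scope.

(* Write [V := u^-1] and [W := u], viewed as constant matrices over K[M]; then
   rho_u substitutes X by V X W, and since V W = 1 and det X <> 0 the adjugate
   becomes V X^* W.  The rows of J_{k,i} are two bottom blocks of rows, of
   V X W and of V X^* W: left multiplication by the upper triangular V mixes
   a row only with the rows below it, so it acts on each block by a
   unitriangular matrix, and right multiplication by the upper triangular W
   acts on the first k columns by the leading k x k block of W.  Both factors
   have determinant 1. *)

Section MatrixEntries.
Context {R : pzRingType} {n : nat}.
Implicit Types (A B V W : 'M[R]_n) (a b c : nat).

Definition mxentry A (a b : nat) : R :=
  match insub a, insub b with
  | Some i, Some j => A i j
  | _, _ => 0
  end.

Lemma mxentryE A (i j : 'I_n) : mxentry A i j = A i j.
Proof. by rewrite /mxentry !valK. Qed.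

Lemma mxentry_out {A a b} : ~~ ((a < n) && (b < n))%N -> mxentry A a b = 0.
Proof. by rewrite /mxentry; case: insubP => [i -> _|//]; case: insubP => [j -> _|]. Qed.

Lemma mxentry_mul {A B a b} : (a < n)%N -> (b < n)%N ->
  mxentry (A *m B) a b = \sum_(0 <= s < n) mxentry A a s * mxentry B s b.
Proof.
move=> lt_an lt_bn.
have -> : a = Ordinal lt_an by []; have -> : b = Ordinal lt_bn by [].
by rewrite mxentryE mxE big_mkord; apply: eq_bigr => s _; rewrite !mxentryE.
Qed.

Lemma mxentry_trig0 {V a b} : is_trig_mx V^T -> (b < a)%N -> mxentry V a b = 0.
Proof.
move=> /is_trig_mxP V0 lt_ba; have [lt_an|le_na] := ltnP a n; last first.
  by rewrite mxentry_out // negb_and -leqNgt le_na.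
have lt_bn := ltn_trans lt_ba lt_an.
have -> : a = Ordinal lt_an by []; have -> : b = Ordinal lt_bn by [].
rewrite mxentryE.
by have := V0 (Ordinal lt_bn) (Ordinal lt_an) lt_ba; rewrite mxE.
Qed.

Lemma mxentry_mul_bottom {V A} p {a c} : is_trig_mx V^T -> (p <= n)%N ->
  (n - p <= a < n)%N -> (c < n)%N ->
  mxentry (V *m A) a c = \sum_(r < p) mxentry V a (n - p + r) * mxentry A (n - p + r) c.
Proof.
move=> Vtrig le_pn /andP[le_a lt_an] lt_cn.
rewrite mxentry_mul // (big_cat_nat (n := (n - p)%N)) ?leq_subr //=.
rewrite big1_seq ?add0r => [|s]; last first.
  by rewrite mem_index_iota => /andP[_ lt_s]; rewrite mxentry_trig0 ?mul0r // (leq_trans lt_s).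
rewrite -{1}(add0n (n - p)%N) big_addn subnBA // addKn big_mkord.
by apply: eq_bigr => r _; rewrite addnC.
Qed.

Lemma mxentry_mul_lead {A W} k {a c} : is_trig_mx W^T -> (k <= n)%N ->
  (a < n)%N -> (c < k)%N ->
  mxentry (A *m W) a c = \sum_(s < k) mxentry A a s * mxentry W s c.
Proof.
move=> Wtrig le_kn lt_an lt_ck.
rewrite (mxentry_mul lt_an (leq_trans lt_ck le_kn)) (big_cat_nat (n := k)) //=.
rewrite [\sum_(k <= s < n) _]big1_seq ?addr0 ?big_mkord // => s.
move=> /andP[_]; rewrite mem_index_iota => /andP[le_ks _].
by rewrite (mxentry_trig0 Wtrig) ?mulr0 //; apply: leq_trans lt_ck le_ks.
Qed.

End MatrixEntries.

Lemma mxentry_map (R S : pzRingType) (f : {additive R -> S}) n (A : 'M[R]_n) a b :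
  f (mxentry A a b) = mxentry (map_mx f A) a b.
Proof.
rewrite /mxentry; case: insub => [x|]; last exact: raddf0.
by case: insub => [y|]; [rewrite mxE | exact: raddf0].
Qed.

Section Unitriangular.
Context {R : pzRingType} {n : nat}.
Implicit Types (V W : 'M[R]_n).

Definition upper_unitriangular V := is_trig_mx V^T /\ forall i, V i i = 1.

Lemma upper_unitriangular_linv {V W} :
  upper_unitriangular V -> W *m V = 1%:M -> upper_unitriangular W.
Proof.
move=> [/is_trig_mxP V0 V1] WV.
have Wrow (i j : 'I_n) : (forall s : 'I_n, (s < j)%N -> W i s = 0) -> W i j = (i == j)%:R.
  move=> W0; have := congr1 (fun M : 'M[R]_n => M i j) WV; rewrite !mxE => <-.
  rewrite (bigD1 j) //= V1 mulr1 big1 ?addr0 // => s ne_sj.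
  have [lt_sj|lt_js|/val_inj eq_sj] := ltngtP s j; last by rewrite eq_sj eqxx in ne_sj.
    by rewrite W0 ?mul0r.
  by have := V0 j s lt_js; rewrite mxE => ->; rewrite mulr0.
have W0 (i j : 'I_n) : (j < i)%N -> W i j = 0.
  elim: {j}_.+1 {-2}j (ltnSn j) => // m IHm j lt_jm lt_ji.
  rewrite Wrow; first by rewrite eq_sym; case: eqP => // eq_ji; rewrite eq_ji ltnn in lt_ji.
  by move=> s lt_sj; apply: IHm; lia.
split=> [|i]; first by apply/is_trig_mxP => i j lt_ij; rewrite mxE W0.
by rewrite Wrow ?eqxx // => s; apply: W0.
Qed.

End Unitriangular.

Lemma upper_unitriangular_map (R S : pzRingType) (f : {rmorphism R -> S}) n
    (V : 'M[R]_n) :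
  upper_unitriangular V -> upper_unitriangular (map_mx f V).
Proof.
move=> [/is_trig_mxP V0 V1]; split=> [|i]; last by rewrite mxE V1 rmorph1.
by apply/is_trig_mxP => i j lt_ij; have := V0 i j lt_ij; rewrite !mxE => ->; rewrite rmorph0.
Qed.

Lemma det_upper_unitriangular (R : comPzRingType) n (V : 'M[R]_n) :
  upper_unitriangular V -> \det V = 1.
Proof. by move=> [Vtrig V1]; rewrite -det_tr det_trig // big1 // => i _; rewrite mxE. Qed.

Lemma mxentry_unitriangular1 (R : pzRingType) n (V : 'M[R]_n) a :
  upper_unitriangular V -> (a < n)%N -> mxentry V a a = 1.
Proof. by move=> [_ V1] lt_an; have -> : a = Ordinal lt_an by []; rewrite mxentryE. Qed.

Lemma sum_ord_split_at {R : nmodType} {k h : nat} {b : bool} (F : nat -> R) :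
  (h <= k)%N ->
  \sum_(t < k | (t < h)%N == b) F t =
    if b then \sum_(t < h) F t else \sum_(t < k - h) F (h + t)%N.
Proof.
move=> le_hk; have [m -> {le_hk}] : exists m, k = (h + m)%N.
  by exists (k - h)%N; rewrite subnKC.
rewrite addKn big_split_ord /=.
have lt_h_lshift (t : 'I_h) : (lshift m t < h)%N by case: t.
have ge_h_rshift (t : 'I_m) : (rshift h t < h)%N = false by rewrite ltnNge leq_addr.
case: b.
  rewrite [X in _ + X]big_pred0 ?addr0 => [|t]; last by rewrite ge_h_rshift.
  by apply: eq_bigl => t; rewrite lt_h_lshift.
rewrite big_pred0 ?add0r => [|t]; last by rewrite lt_h_lshift.
by apply: eq_bigl => t; rewrite ge_h_rshift.
Qed.

Section StackedMinor.
Context {R : comPzRingType} {n : nat} (k i : nat).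
Hypotheses (le_kn : (k <= n)%N) (le_ik : (i <= k)%N).
Implicit Types (A B V W : 'M[R]_n).

Definition stack_row (r : nat) : nat :=
  if (r < k - i)%N then (n - k + i + r)%N else (n - i + (r - (k - i)))%N.

Definition stack_minor A B : 'M[R]_k :=
  \matrix_(r < k, c < k) mxentry (if (r < k - i)%N then A else B) (stack_row r) c.

Definition lead_minor W : 'M[R]_k := \matrix_(r < k, c < k) mxentry W r c.

Definition stack_coef V : 'M[R]_k :=
  \matrix_(r < k, t < k)
    if (t < k - i)%N == (r < k - i)%N then mxentry V (stack_row r) (stack_row t) else 0.

Lemma stack_row_lt r : (r < k)%N -> (stack_row r < n)%N.
Proof. rewrite /stack_row; case: ifP => ? ?; lia. Qed.

Lemma stack_row_mono r t : (r < t)%N -> (r < k - i)%N == (t < k - i)%N ->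
  (stack_row r < stack_row t)%N.
Proof. rewrite /stack_row => lt_rt; case: ifP; case: ifP => //= *; lia. Qed.

Lemma stack_minor_mulmxr A B W : is_trig_mx W^T ->
  stack_minor (A *m W) (B *m W) = stack_minor A B *m lead_minor W.
Proof.
move=> Wtrig; apply/matrixP => r c; rewrite !mxE -(fun_if (fun M => M *m W)).
rewrite (mxentry_mul_lead k) ?stack_row_lt //.
by apply: eq_bigr => s _; rewrite !mxE.
Qed.

Lemma stack_minor_mulmxl A B V : is_trig_mx V^T ->
  stack_minor (V *m A) (V *m B) = stack_coef V *m stack_minor A B.
Proof.
move=> Vtrig; apply/matrixP => r c; rewrite !mxE -(fun_if (fun M => V *m M)).
under eq_bigr do rewrite !mxE (fun_if (fun x => x * _)) mul0r.
pose G t := mxentry V (stack_row r) (stack_row t) *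
  mxentry (if (t < k - i)%N then A else B) (stack_row t) c.
rewrite -big_mkcond /= (sum_ord_split_at G) ?leq_subr //.
have le_c : (c < n)%N by apply: leq_trans (ltn_ord c) le_kn.
have lt_rn := stack_row_lt _ (ltn_ord r).
case: ifP => lt_r.
  have le_r : (n - (k - i) <= stack_row r)%N by rewrite /stack_row lt_r; lia.
  rewrite (mxentry_mul_bottom (k - i)) ?le_r ?(leq_trans (leq_subr i k)) //.
  apply: eq_bigr => t _; rewrite /G /stack_row lt_r (ltn_ord t).
  by have -> : (n - (k - i) + t = n - k + i + t)%N by lia.
have le_r : (n - i <= stack_row r)%N by rewrite /stack_row lt_r; lia.
rewrite subKn // (mxentry_mul_bottom i) ?le_r ?(leq_trans le_ik) //.
apply: eq_bigr => t _; rewrite /G /stack_row lt_r ltnNge leq_addr /=.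
by rewrite addKn.
Qed.

Lemma det_lead_minor W : upper_unitriangular W -> \det (lead_minor W) = 1.
Proof.
move=> Wunit; rewrite -det_tr det_trig.
  by rewrite big1 // => r _; rewrite !mxE mxentry_unitriangular1 // (leq_trans _ le_kn).
by apply/is_trig_mxP => r c lt_rc; rewrite !mxE mxentry_trig0 //; case: Wunit.
Qed.

Lemma det_stack_coef V : upper_unitriangular V -> \det (stack_coef V) = 1.
Proof.
move=> Vunit; have [Vtrig _] := Vunit; rewrite -det_tr det_trig.
  by rewrite big1 // => r _; rewrite !mxE eqxx mxentry_unitriangular1 ?stack_row_lt.
apply/is_trig_mxP => r t lt_rt; rewrite !mxE; case: ifP => // same.
by rewrite mxentry_trig0 ?stack_row_mono.
Qed.

Lemma det_stack_minor_conj A B V W :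
  upper_unitriangular V -> upper_unitriangular W ->
  \det (stack_minor (V *m A *m W) (V *m B *m W)) = \det (stack_minor A B).
Proof.
move=> Vunit Wunit; have [Vtrig _] := Vunit; have [Wtrig _] := Wunit.
rewrite stack_minor_mulmxr // stack_minor_mulmxl // !det_mulmx.
by rewrite det_stack_coef // det_lead_minor // mul1r mulr1.
Qed.

End StackedMinor.

Lemma adj_conjmx (R : idomainType) n (P Q A : 'M[R]_n) :
  Q *m P = 1%:M -> \det A != 0 -> \adj (P *m A *m Q) = P *m \adj A *m Q.
Proof.
move=> QP detA_neq0; set S := P *m A *m Q.
have detS : \det S = \det A.
  by rewrite !det_mulmx mulrC mulrA -det_mulmx QP det1 mul1r.
have adjS_mul : (P *m \adj A *m Q) *m S = (\det S)%:M.
  rewrite detS /S -!mulmxA (mulmxA Q P) QP mul1mx (mulmxA (\adj A)) mul_adj_mx.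
  by rewrite mul_scalar_mx -scalemxAr (mulmx1C QP) scalemx1.
apply/eqP; rewrite -subr_eq0.
suff: \det S *: (\adj S - P *m \adj A *m Q) == 0.
  by rewrite scalemx_eq0 detS (negbTE detA_neq0).
by rewrite -mul_mx_scalar -mul_mx_adj mulmxA mulmxBl mul_adj_mx adjS_mul subrr mul0mx.
Qed.

Lemma map_stack_minor (R S : comPzRingType) (f : {additive R -> S}) n k i
    (A B : 'M[R]_n) :
  map_mx f (stack_minor k i A B) = stack_minor k i (map_mx f A) (map_mx f B).
Proof. by apply/matrixP => r c; rewrite !mxE mxentry_map; case: ifP. Qed.

Section CoordinateRing.
Variables (K : fieldType) (n : nat).
Local Notation X := (Defs.genmx K n).

Lemma genmxE (a b : 'I_n) : X a b = 'X_(mxvec_index a b).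
Proof. by rewrite /Defs.genmx /vec_mx !mxE. Qed.

Lemma det_genmx_neq0 : \det X != 0.
Proof.
pose id_point (m : 'I_(n * n)) := mxvec (1%:M : 'M[K]_n) 0 m.
apply/eqP => /(congr1 (meval id_point)); rewrite -det_map_mx rmorph0.
have -> : map_mx (meval id_point) X = 1%:M.
  by apply/matrixP => a b; rewrite mxE genmxE mevalXU /id_point mxvecE.
by rewrite det1 => /eqP; rewrite oner_eq0.
Qed.

Lemma map_genmx_comp (S : 'M[coordring K n]_n) :
  map_mx (comp_mpoly [tuple mxvec S 0 m | m < n * n]) X = S.
Proof.
apply/matrixP => a b.
by rewrite mxE genmxE comp_mpolyXU -(tnth_nth 0) tnth_mktuple mxvecE.
Qed.

Lemma J_stack_minor k i : J K n k i = \det (stack_minor k i X (genadj K n)).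
Proof. by congr (\det _); apply/matrixP => r c; rewrite !mxE /stack_row; case: ifP. Qed.

End CoordinateRing.

Lemma unitriangularP (K : fieldType) n (u : 'M[K]_n) :
  unitriangular u -> upper_unitriangular u.
Proof. by case=> u0 u1; split=> //; apply/is_trig_mxP => i j lt_ij; rewrite mxE u0. Qed.

Theorem proposition1 (K : fieldType) (n : nat) :
  [pchar K] =i pred0 -> (1 <= n)%N ->
  forall (k i : nat), (1 <= k)%N -> (k <= n)%N -> (i <= k - 1)%N ->
  forall u : 'M[K]_n, unitriangular u ->
  rho u (J K n k i) = J K n k i.
Proof.
move=> _ _ k i _ le_kn le_ik1 u /unitriangularP u_unit.
have le_ik : (i <= k)%N := leq_trans le_ik1 (leq_subr 1 k).
have u_inv : u \in unitmx by rewrite unitmxE det_upper_unitriangular // unitr1.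
have uinv_unit := upper_unitriangular_linv u_unit (mulVmx u_inv).
pose C (M : 'M[K]_n) := map_mx (fun c => c%:MP : coordring K n) M.
have CuC : C u *m C (invmx u) = 1%:M by rewrite -map_mxM mulmxV // map_mx1.
rewrite /rho J_stack_minor -det_map_mx map_stack_minor map_genmx_comp.
rewrite /genadj map_mx_adj map_genmx_comp adj_conjmx ?det_genmx_neq0 //.
by rewrite det_stack_minor_conj //; apply: upper_unitriangular_map.
Qed.
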